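(* Let $G$ be a group with a finite-index normal subgroup $A\cong\mathbb{Z}^2$. Suppose there is $g\in G$ such that the automorphism $a\mapsto g^{-1}ag$ of $A$ is neither the identity map nor the inversion map. Then $G$ has quadratic automorphic growth.
   Context: For a finitely generated group $G$ with finite generating set $\Sigma$, the automorphic growth function sends $n$ to the number of $\operatorname{Aut}(G)$-orbits of $G$ containing an element of word length at most $n$. Quadratic means it is $\sim$-equivalent to $n\mapsto n^2$, where $f\sim g$ iff $f\preccurlyeq g$ and $g\preccurlyeq f$, and $f\preccurlyeq g$ means there is $\lambda\in\mathbb{N}\setminus\{0\}$ with $f(n)\le\lambda g(\lambda n+\lambda)+\lambda$ for all $n$ (this is independent of $\Sigma$). *)

From mathcomp Require Import all_boot all_algebra finmap.
From mathcomp Require Import classical_sets cardinality boolp.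
From Stdlib Require List.

Set Implicit Arguments. Unset Strict Implicit. Unset Printing Implicit Defensive.

Local Open Scope classical_set_scope.
Local Open Scope fset_scope.

Record group := Group {
  gcar :> Type;
  gmul : gcar -> gcar -> gcar;
  ginv : gcar -> gcar;
  gone : gcar;
  gmulA : forall x y z, gmul x (gmul y z) = gmul (gmul x y) z;
  gmul1l : forall x, gmul gone x = x;
  gmulVl : forall x, gmul (ginv x) x = gone }.

Arguments gmul {g}.
Arguments ginv {g}.
Arguments gone {g}.

Section GroupDefs.
Variable G : group.

Definition is_hom (f : G -> G) : Prop :=
  forall x y, f (gmul x y) = gmul (f x) (f y).

Definition is_aut (f : G -> G) : Prop := is_hom f /\ bijective f.

Definition aut_orbit (x : G) : set G := [set y | exists f, is_aut f /\ f x = y].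

Definition is_subgroup (A : set G) : Prop :=
  A gone /\ (forall x y, A x -> A y -> A (gmul x y)) /\ (forall x, A x -> A (ginv x)).

Definition is_normal (A : set G) : Prop :=
  is_subgroup A /\ forall g a, A a -> A (gmul (gmul (ginv g) a) g).

Definition finite_index (A : set G) : Prop :=
  exists R : seq G, forall g, exists2 r, List.In r R & exists2 a, A a & g = gmul r a.

Definition zadd2 (p q : int * int) : int * int := ((p.1 + q.1)%R, (p.2 + q.2)%R).

Definition iso_Z2 (A : set G) : Prop :=
  exists phi : int * int -> G,
    (forall p q, phi (zadd2 p q) = gmul (phi p) (phi q)) /\
    injective phi /\ (forall x, A x <-> exists p, phi p = x).

Definition gen_letter (S : seq G) (s : G) : Prop :=
  exists2 t, List.In t S & (s = t \/ s = ginv t).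

Definition word_value (l : seq G) : G := foldr (@gmul G) (@gone G) l.

Definition in_ball (S : seq G) (n : nat) (x : G) : Prop :=
  exists l : seq G, List.Forall (gen_letter S) l /\ (size l <= n)%N /\ word_value l = x.

Definition generates (S : seq G) : Prop := forall x, exists n, in_ball S n x.

Definition aut_growth (S : seq G) (n : nat) : nat :=
  #|` fset_set [set O : set G | exists x, in_ball S n x /\ O = aut_orbit x] |.

End GroupDefs.

Definition growth_preceq (f g : nat -> nat) : Prop :=
  exists lam : nat, (0 < lam)%N /\ forall n, (f n <= lam * g (lam * n + lam) + lam)%N.

Definition growth_equiv (f g : nat -> nat) : Prop :=
  growth_preceq f g /\ growth_preceq g f.

Definition quadratic_aut_growth (G : group) : Prop :=
  (exists S : seq G, generates S) /\
  forall S : seq G, generates S -> growth_equiv (aut_growth S) (fun n => (n ^ 2)%N).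

(* Let N be a multiple of the index of A, so that x^N lies in A for every x.
   An automorphism f maps N A into A and so acts by an integer matrix B_f, with
   B_(f^-1) B_f = N^2.  B_f conjugates the action M of g on A into the action of
   f(g), which only depends on the coset of f(g) modulo A: finitely many
   matrices M' of finite order.  As M <> 1, -1, such intertwiners have bounded
   entries: for v with det(v, M v) <> 0, the integer quadratic form
   w |-> det(w, M' w) takes at w = B v the nonzero bounded value
   det B * det(v, M v), and this form is definite or a product of two linear
   forms.  Hence an Aut(G)-orbit contains boundedly many of the n^2 elements
   N (i, j), 0 <= i, j <= n, of the ball of radius O(n), giving at least c n^2
   orbits.  Conversely each element of the n-ball is r (p, q) with r in a fixed
   transversal of A and |p| + |q| = O(n), giving at most C n^2 orbits. *)

From mathcomp Require Import all_boot all_order all_algebra finmap.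
From mathcomp Require Import classical_sets cardinality boolp.
From mathcomp Require Import zify ring.
Set Implicit Arguments. Unset Strict Implicit. Unset Printing Implicit Defensive.

Import Order.TTheory GRing.Theory Num.Theory.

Section GroupTheory.
Variable G : group.
Implicit Types x y z : G.
Local Notation "x * y" := (gmul x y).
Local Notation "x ^-1" := (ginv x).
Local Notation "1" := (@gone G).

Lemma gmulV x : x * x^-1 = 1.
Proof.
rewrite -{1}(gmul1l (x * x^-1)) -{1}(gmulVl (x^-1)).
by rewrite -gmulA (gmulA (x^-1)) gmulVl gmul1l gmulVl.
Qed.

Lemma gmul1r x : x * 1 = x.
Proof. by rewrite -(gmulVl x) gmulA gmulV gmul1l. Qed.

Lemma gmulKl x y : x^-1 * (x * y) = y.
Proof. by rewrite gmulA gmulVl gmul1l. Qed.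

Lemma gmulKVl x y : x * (x^-1 * y) = y.
Proof. by rewrite gmulA gmulV gmul1l. Qed.

Lemma gmulI x y z : x * y = x * z -> y = z.
Proof. by move=> e; rewrite -(gmulKl x y) e gmulKl. Qed.

Lemma ginv_unique x y : x * y = 1 -> y = x^-1.
Proof. by move=> e; apply: (gmulI (x := x)); rewrite e gmulV. Qed.

Lemma ginvM x y : (x * y)^-1 = y^-1 * x^-1.
Proof. by symmetry; apply: ginv_unique; rewrite -gmulA gmulKVl gmulV. Qed.

Lemma ginv1 : 1^-1 = 1.
Proof. by symmetry; apply: ginv_unique; rewrite gmul1l. Qed.

Fixpoint gexp x (n : nat) : G := if n is n'.+1 then x * gexp x n' else 1.

Lemma gexpD x m n : gexp x (m + n) = gexp x m * gexp x n.
Proof. by elim: m => [|m IH] /=; rewrite ?gmul1l // IH gmulA. Qed.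

Lemma gexpSr x n : gexp x n.+1 = gexp x n * x.
Proof. by rewrite -addn1 gexpD /= gmul1r. Qed.

Lemma gexpM x m n : gexp x (m * n) = gexp (gexp x m) n.
Proof. by elim: n => [|n IH]; rewrite ?muln0 // mulnS gexpD IH. Qed.

Lemma ginvX x n : (gexp x n)^-1 = gexp (x^-1) n.
Proof. by elim: n => [|n IH] /=; rewrite ?ginv1 // ginvM IH -gexpSr. Qed.

Lemma word_value_cat (l1 l2 : seq G) :
  word_value (l1 ++ l2) = word_value l1 * word_value l2.
Proof. by elim: l1 => [|a l IH] /=; rewrite ?gmul1l // IH gmulA. Qed.

Section Balls.
Variable S : seq G.

Lemma in_ball0 : in_ball S 0 1.
Proof. by exists [::]. Qed.

Lemma in_ballM m n x y : in_ball S m x -> in_ball S n y -> in_ball S (m + n) (x * y).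
Proof.
move=> [l1 [F1 [s1 <-]]] [l2 [F2 [s2 <-]]]; exists (l1 ++ l2).
by rewrite List.Forall_app size_cat leq_add // word_value_cat.
Qed.

Lemma in_ballS m n x : (m <= n)%N -> in_ball S m x -> in_ball S n x.
Proof. by move=> le [l [F [s v]]]; exists l; rewrite (leq_trans s le). Qed.

Lemma in_ballX m x k : in_ball S m x -> in_ball S (k * m) (gexp x k).
Proof.
move=> b; elim: k => [|k IH]; first exact: in_ball0.
by rewrite mulSn; apply: in_ballM.
Qed.

Lemma in_ball_letter s : gen_letter S s -> in_ball S 1 s.
Proof. by exists [:: s]; rewrite /= gmul1r; split; first constructor. Qed.

End Balls.

Section Homomorphisms.
Variable f : G -> G.
Hypothesis hom_f : is_hom f.

Lemma hom1 : f 1 = 1.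
Proof. by apply: (@gmulI (f 1)); rewrite -hom_f gmul1l gmul1r. Qed.

Lemma homV x : f (x^-1) = (f x)^-1.
Proof. by apply: ginv_unique; rewrite -hom_f gmulV hom1. Qed.

Lemma homX x n : f (gexp x n) = gexp (f x) n.
Proof. by elim: n => [|n IH] /=; rewrite ?hom1 // hom_f IH. Qed.

End Homomorphisms.

Lemma is_aut_id : is_aut (fun x : G => x).
Proof. by split; [move=> x y | exists id]. Qed.

Lemma hom_inv (f f' : G -> G) : is_hom f -> cancel f f' -> cancel f' f -> is_hom f'.
Proof. by move=> hf c1 c2 x y; rewrite -{1}(c2 x) -{1}(c2 y) -hf c1. Qed.

End GroupTheory.

Local Open Scope ring_scope.

Record mat2 := Mat2 { m11 : int; m12 : int; m21 : int; m22 : int }.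

Definition vec2 := (int * int)%type.

Definition mxv (M : mat2) (v : vec2) : vec2 :=
  (m11 M * v.1 + m12 M * v.2, m21 M * v.1 + m22 M * v.2).

Definition mxmul (M P : mat2) : mat2 :=
  Mat2 (m11 M * m11 P + m12 M * m21 P) (m11 M * m12 P + m12 M * m22 P)
       (m21 M * m11 P + m22 M * m21 P) (m21 M * m12 P + m22 M * m22 P).

Definition mxscale (k : int) : mat2 := Mat2 k 0 0 k.

Notation mx1 := (mxscale 1).

Definition mxopp (M : mat2) : mat2 := Mat2 (- m11 M) (- m12 M) (- m21 M) (- m22 M).

Definition mxexp (M : mat2) (n : nat) : mat2 := iter n (mxmul M) mx1.

Definition mxtr (M : mat2) : int := m11 M + m22 M.

Definition mxdet (M : mat2) : int := m11 M * m22 M - m12 M * m21 M.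

Definition cross (u v : vec2) : int := u.1 * v.2 - u.2 * v.1.

Definition vscale (k : int) (v : vec2) : vec2 := (k * v.1, k * v.2).

Definition vnorm (v : vec2) : int := `|v.1| + `|v.2|.

Definition mxnorm (M : mat2) : int := `|m11 M| + `|m12 M| + `|m21 M| + `|m22 M|.

Lemma mat2_eq (M P : mat2) :
  m11 M = m11 P -> m12 M = m12 P -> m21 M = m21 P -> m22 M = m22 P -> M = P.
Proof. by case: M; case: P => /= ? ? ? ? ? ? ? ? -> -> -> ->. Qed.

Lemma mxv_inj (M P : mat2) : mxv M =1 mxv P -> M = P.
Proof.
case: M P => [a b c d] [e f g h] eMP.
move: (eMP (1, 0)) (eMP (0, 1)); rewrite /mxv /= !mulr1 !mulr0 !addr0 !add0r.
by case=> -> -> [-> ->].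
Qed.

Lemma mxvM M P v : mxv (mxmul M P) v = mxv M (mxv P v).
Proof. case: M P v => [a b c d] [e f g h] [x y]; rewrite /mxv /=; congr (_, _); ring. Qed.

Lemma mxmulA M P Q : mxmul M (mxmul P Q) = mxmul (mxmul M P) Q.
Proof. by apply: mxv_inj => v; rewrite !mxvM. Qed.

Lemma mxmul1l M : mxmul mx1 M = M.
Proof. case: M => [a b c d]; apply: mat2_eq => /=; ring. Qed.

Lemma mxmul1r M : mxmul M mx1 = M.
Proof. case: M => [a b c d]; apply: mat2_eq => /=; ring. Qed.

Lemma mxdetM M P : mxdet (mxmul M P) = mxdet M * mxdet P.
Proof. case: M P => [a b c d] [e f g h]; rewrite /mxdet /=; ring. Qed.

Lemma cross_mxv M u v : cross (mxv M u) (mxv M v) = mxdet M * cross u v.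
Proof. case: M u v => [a b c d] [x y] [z t]; rewrite /cross /mxdet /=; ring. Qed.

Lemma mxexp0 M : mxexp M 0 = mx1.
Proof. by []. Qed.

Lemma mxexpS M n : mxexp M n.+1 = mxmul M (mxexp M n).
Proof. by []. Qed.

Lemma mxexp1 M : mxexp M 1 = M.
Proof. exact: mxmul1r. Qed.

Lemma mxexpD M m n : mxexp M (m + n) = mxmul (mxexp M m) (mxexp M n).
Proof. by elim: m => [|m IH]; rewrite ?mxmul1l // addSn !mxexpS IH mxmulA. Qed.

Lemma mxv_exp M k v : mxv (mxexp M k) v = iter k (mxv M) v.
Proof.
elim: k => [|k IH]; last by rewrite mxexpS mxvM IH.
by case: v => x y; rewrite /mxv /=; congr (_, _); ring.
Qed.

Lemma mxdet_exp M n : mxdet (mxexp M n) = mxdet M ^+ n.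
Proof. by elim: n => [|n IH]; rewrite ?expr0 // mxexpS mxdetM IH exprS. Qed.

Lemma mxexp_opp_double M n : mxexp (mxopp M) (n + n) = mxexp M (n + n).
Proof.
have opp_sq : mxmul (mxopp M) (mxopp M) = mxmul M M.
  by case: M => [a b c d]; apply: mat2_eq => /=; ring.
elim: n => [|n IH] //.
by rewrite addSn addnS !mxexpS IH !mxmulA opp_sq.
Qed.

Lemma mxtr1 : mxtr mx1 = 2.
Proof. by []. Qed.

Lemma mxtr_expSS M k :
  mxtr (mxexp M k.+2) = mxtr M * mxtr (mxexp M k.+1) - mxdet M * mxtr (mxexp M k).
Proof.
rewrite !mxexpS; case: M (mxexp M k) => [a b c d] [e f g h].
by rewrite /mxtr /mxdet /=; ring.
Qed.

Lemma normr_le_sqr (x : int) : `|x| <= x * x.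
Proof. by nia. Qed.

Lemma normr_le_mull (a x : int) : a != 0 -> `|x| <= `|a * x|.
Proof. by move=> a_neq0; rewrite normrM; nia. Qed.

Lemma normr_mul_le (a x K : int) : `|x| <= K -> `|a * x| <= `|a| * K.
Proof. by move=> x_le; rewrite normrM ler_wpM2l. Qed.

Lemma vnorm_ge0 v : 0 <= vnorm v.
Proof. by rewrite /vnorm; lia. Qed.

Lemma vnormD u v : vnorm (zadd2 u v) <= vnorm u + vnorm v.
Proof. by rewrite /vnorm /zadd2 /=; lia. Qed.

Lemma vnormZ k v : vnorm (vscale k v) = `|k| * vnorm v.
Proof. by rewrite /vnorm /vscale /= !normrM mulrDr. Qed.

Lemma vnorm_mxv M v : vnorm (mxv M v) <= mxnorm M * vnorm v.
Proof.
case: M v => a b c d [x y]; rewrite /vnorm /mxnorm /mxv /=.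
have := ler_normD (a * x) (b * y); have := ler_normD (c * x) (d * y).
have ge0 (r t : int) : 0 <= `|r| * `|t| by rewrite mulr_ge0.
move: (ge0 a y) (ge0 b x) (ge0 c y) (ge0 d x).
by rewrite !normrM !mulrDl !mulrDr; lia.
Qed.

Lemma vscale_inj (N : nat) : (0 < N)%N -> injective (vscale N%:Z).
Proof.
move=> N_gt0 [a b] [c d] [ac bd].
have N_neq0 : N%:Z != 0 by lia.
by congr (_, _); apply: (mulfI N_neq0).
Qed.

Lemma mxnorm_cols B : mxnorm B = vnorm (mxv B (1, 0)) + vnorm (mxv B (0, 1)).
Proof. by case: B => a b c d; rewrite /mxnorm /vnorm /mxv /=; lia. Qed.

Lemma mxdet_finite_order M N :
  (0 < N)%N -> mxexp M N = mx1 -> mxdet M = 1 \/ mxdet M = -1.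
Proof.
move=> N_gt0 MN1; have := mxdet_exp M N; rewrite MN1 => /esym detN.
have : `|mxdet M| ^+ N = 1 by rewrite -normrX detN.
by move/eqP; rewrite pexpr_eq1 // => /eqP; lia.
Qed.

Lemma mxexp_neq1_det1 M N :
  mxdet M = 1 -> 3 <= mxtr M -> (0 < N)%N -> mxexp M N <> mx1.
Proof.
move=> det1 tr_ge3 N_gt0 MN1.
have tr_incr k : 2 <= mxtr (mxexp M k) /\ mxtr (mxexp M k) + 1 <= mxtr (mxexp M k.+1).
  elim: k => [|k [IH1 IH2]]; first by rewrite mxexp0 mxexp1 mxtr1; lia.
  by rewrite mxtr_expSS det1; nia.
case: N N_gt0 MN1 => [//|k] _ MN1.
by have := tr_incr k; rewrite MN1 /mxtr /=; lia.
Qed.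

Lemma mxexp_neq1_detN1 M N :
  mxdet M = -1 -> 1 <= mxtr M -> (0 < N)%N -> mxexp M N <> mx1.
Proof.
move=> detN1 tr_ge1 N_gt0.
case: N N_gt0 => [//|[|k]] _.
  by rewrite mxexp1 => M1; move: detN1; rewrite M1.
have tr_incr j : [/\ 1 <= mxtr (mxexp M j.+1),
    mxtr (mxexp M j.+1) + 1 <= mxtr (mxexp M j.+2) & 3 <= mxtr (mxexp M j.+2)].
  elim: j => [|j [IH1 IH2 IH3]].
    by rewrite mxtr_expSS detN1 mxexp0 mxexp1 mxtr1; split; nia.
  by split; [lia | |]; rewrite (mxtr_expSS M j.+1) detN1; nia.
by move=> MN1; have [_ _] := tr_incr k; rewrite MN1 /mxtr /=; lia.
Qed.

(* A matrix with determinant 1 and trace 2 satisfies (M - 1)^2 = 0, so its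
   powers are 1 + k (M - 1). *)
Lemma unipotent_finite_order M N :
  mxdet M = 1 -> mxtr M = 2 -> (0 < N)%N -> mxexp M N = mx1 -> M = mx1.
Proof.
case: M => [a b c d]; rewrite /mxdet /mxtr /= => det1 tr2 N_gt0.
have powE (k : nat) : mxexp (Mat2 a b c d) k =
    Mat2 (1 + k%:Z * (a - 1)) (k%:Z * b) (k%:Z * c) (1 + k%:Z * (d - 1)).
  elim: k => [|k IH]; first by apply: mat2_eq => /=; lia.
  have bc : k%:Z * (b * c) = k%:Z * (a * d - 1) by rewrite -det1; ring.
  have trk (x : int) : k%:Z * x * (a + d) = k%:Z * x * 2 by rewrite tr2.
  move: (trk a) (trk b) (trk c) (trk d) => *.
  by rewrite mxexpS IH; apply: mat2_eq => /=; lia.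
rewrite powE => /(congr1 (fun P => (m11 P, m12 P, m21 P))) /= [e1 e2 e3].
by apply: mat2_eq => /=; nia.
Qed.

(* The trace/determinant types of the finite-order matrices other than 1 and -1:
   elliptic ones (det 1, trace in {-1, 0, 1}) and reflections (det -1, trace 0). *)
Definition torsion_type (M : mat2) : Prop :=
  (mxdet M = 1 /\ mxtr M * mxtr M <= 1) \/ (mxdet M = -1 /\ mxtr M = 0).

Lemma finite_order_torsion_type M N : (0 < N)%N -> mxexp M N = mx1 ->
  M <> mx1 -> M <> mxscale (-1) -> torsion_type M.
Proof.
move=> N_gt0 MN1 M_neq1 M_neqN1.
have N2_gt0 : (0 < N + N)%N by rewrite addn_gt0 N_gt0.
have oppMN1 : mxexp (mxopp M) (N + N) = mx1.
  by rewrite mxexp_opp_double mxexpD MN1 mxmul1l.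
have det_opp : mxdet (mxopp M) = mxdet M by rewrite /mxdet /=; ring.
have tr_opp : mxtr (mxopp M) = - mxtr M by rewrite /mxtr /=; ring.
have [det1|detN1] := mxdet_finite_order N_gt0 MN1; [left | right]; split => //.
  have [tr_ge3|tr_le2] : 3 <= mxtr M \/ mxtr M <= 2 by lia.
    by case: (mxexp_neq1_det1 det1 tr_ge3 N_gt0).
  have [tr_leN3|tr_geN2] : mxtr M <= -3 \/ -2 <= mxtr M by lia.
    by case: (@mxexp_neq1_det1 (mxopp M) (N + N)); rewrite ?det_opp ?tr_opp //; lia.
  have [tr2|tr_le1] : mxtr M = 2 \/ mxtr M <= 1 by lia.
    by case: M_neq1; exact: (unipotent_finite_order det1 tr2 N_gt0 MN1).
  have [trN2|tr_geN1] : mxtr M = -2 \/ -1 <= mxtr M by lia.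
    case: M_neqN1; have := @unipotent_finite_order (mxopp M) (N + N).
    rewrite det_opp tr_opp trN2 => /(_ det1 (opprK _) N2_gt0 oppMN1).
    by case: (M) => a b c d [] ? ? ? ?; apply: mat2_eq => /=; lia.
  by nia.
have [tr_ge1|tr_le0] : 1 <= mxtr M \/ mxtr M <= 0 by lia.
  by case: (mxexp_neq1_detN1 detN1 tr_ge1 N_gt0).
have [tr_leN1|tr_ge0] : mxtr M <= -1 \/ 0 <= mxtr M by lia.
  by case: (@mxexp_neq1_detN1 (mxopp M) (N + N)); rewrite ?det_opp ?tr_opp //; lia.
by lia.
Qed.

(* For M = [a b; c d] and Q(x, y) = cross (x, y) (M (x, y)): with X = 2cx + (d - a)y,
   4cQ = X^2 + (4 - tr^2) y^2, which is positive definite when tr^2 <= 1. *)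
Lemma cross_form_bound_elliptic M C : mxdet M = 1 -> mxtr M * mxtr M <= 1 ->
  exists K, forall w, `|cross w (mxv M w)| <= C -> vnorm w <= K.
Proof.
case: M => a b c d; rewrite /mxdet /mxtr /= => det1 tr_le1.
have c_neq0 : c != 0 by apply/eqP => c0; rewrite c0 in det1; nia.
set T := 4 * `|c| * C.
exists (2 * (T + (`|d| + `|a|) * T)) => -[x y]; rewrite /cross /vnorm /mxv /=.
set Q := _ - _ => Q_le.
have T_ge0 : 0 <= T by rewrite /T !mulr_ge0 // (le_trans _ Q_le).
set X := 2 * c * x + (d - a) * y.
have Q_sq : 4 * c * Q = X * X + (4 - (a + d) * (a + d)) * (y * y).
  have -> : 4 * c * Q = X * X + (4 * (a * d - b * c) - (a + d) * (a + d)) * (y * y).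
    by rewrite /Q /X; ring.
  by rewrite det1 mulr1.
have cQ_le : `|4 * c * Q| <= T.
  rewrite /T -mulrA (normrM 4) normrM.
  have : `|Q| * `|c| <= C * `|c| by apply: ler_wpM2r.
  by lia.
have X2_le : X * X <= T by nia.
have y2_le : y * y <= T by nia.
have y_le := normr_le_sqr y; have X_le := normr_le_sqr X.
have ady_le : `|(d - a) * y| <= `|d - a| * T by apply: normr_mul_le; lia.
have x_le : `|x| <= `|2 * c * x| by apply: normr_le_mull; lia.
have cxE : 2 * c * x = X - (d - a) * y by rewrite /X; ring.
have ad_le : `|d - a| * T <= (`|d| + `|a|) * T by apply: ler_wpM2r; lia.
have adT_ge0 : 0 <= (`|d| + `|a|) * T by rewrite mulr_ge0 ?addr_ge0.
by lia.
Qed.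

(* For a reflection, cQ(x, y) = U V with U = cx - (a + 1)y and V = cx - (a - 1)y;
   if c = 0 then Q(x, y) = -y (2ax + by). Either way Q is a product of two integer
   linear forms, and Q <> 0 bounds both factors. *)
Lemma cross_form_bound_reflection M C : mxdet M = -1 -> mxtr M = 0 ->
  exists K, forall w, cross w (mxv M w) != 0 -> `|cross w (mxv M w)| <= C -> vnorm w <= K.
Proof.
case: M => a b c d; rewrite /mxdet /mxtr /= => detN1 tr0.
have dE : d = - a by lia.
subst d; have [c0|c_neq0] := eqVneq c 0.
  subst c.
  exists (2 * (C + `|b| * C)) => -[x y]; rewrite /cross /vnorm /mxv /=.
  have -> : x * (0 * x + - a * y) - y * (a * x + b * y) = - (y * (2 * a * x + b * y)).
    by ring.
  rewrite normrN oppr_eq0 mulf_eq0 negb_or => /andP [y_neq0 W_neq0].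
  rewrite normrM => Q_le.
  have y_ge1 : 1 <= `|y| by lia.
  have W_ge1 : 1 <= `|2 * a * x + b * y| by lia.
  have y_le : `|y| <= C by nia.
  have W_le : `|2 * a * x + b * y| <= C by nia.
  have x_le : `|x| <= `|2 * a * x| by apply: normr_le_mull; lia.
  have by_le : `|b * y| <= `|b| * C by apply: normr_mul_le.
  have bC_ge0 : 0 <= `|b| * C by rewrite mulr_ge0 // (le_trans _ Q_le) ?mulr_ge0.
  by lia.
set T := `|c| * C.
exists (2 * (T + `|a + 1| * T)) => -[x y]; rewrite /cross /vnorm /mxv /=.
set Q := _ - _ => Q_neq0 Q_le.
have T_ge0 : 0 <= T by rewrite /T mulr_ge0 // (le_trans _ Q_le).
set U := c * x - (a + 1) * y.
set V := c * x - (a - 1) * y.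
have cQ : c * Q = U * V.
  have -> : c * Q = U * V + (1 - a * a - b * c) * (y * y) by rewrite /Q /U /V; ring.
  have -> : 1 - a * a - b * c = 0 by lia.
  by rewrite mul0r addr0.
have UV_neq0 : U * V != 0 by rewrite -cQ mulf_neq0.
have U_neq0 : U != 0 by apply: contraNneq UV_neq0 => ->; rewrite mul0r.
have V_neq0 : V != 0 by apply: contraNneq UV_neq0 => ->; rewrite mulr0.
have UV_le : `|U| * `|V| <= T by rewrite -normrM -cQ normrM ler_wpM2l.
have U_ge1 : 1 <= `|U| by lia.
have V_ge1 : 1 <= `|V| by lia.
have U_le : `|U| <= T by nia.
have V_le : `|V| <= T by nia.
have y_le : `|y| <= T by rewrite /U /V in U_le V_le; lia.
have x_le : `|x| <= `|c * x| by apply: normr_le_mull.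
have ay_le : `|(a + 1) * y| <= `|a + 1| * T by apply: normr_mul_le.
have aT_ge0 : 0 <= `|a + 1| * T by rewrite mulr_ge0.
by rewrite /U in U_le; lia.
Qed.

Lemma cross_form_bound M C : torsion_type M ->
  exists K, forall w, cross w (mxv M w) != 0 -> `|cross w (mxv M w)| <= C -> vnorm w <= K.
Proof.
case=> [[det1 tr_le1]|[detN1 tr0]]; last exact: cross_form_bound_reflection.
have [K bound] := cross_form_bound_elliptic C det1 tr_le1.
by exists K => w _; apply: bound.
Qed.

Lemma cramer2 B v w u : vscale (cross v w) (mxv B u) =
  zadd2 (vscale (cross u w) (mxv B v)) (vscale (cross v u) (mxv B w)).
Proof.
case: B v w u => a b c d [x y] [z t] [p q].
by rewrite /vscale /zadd2 /cross /mxv /=; congr (_, _); ring.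
Qed.

Lemma mxnorm_le_of_images B v w K : cross v w != 0 ->
  vnorm (mxv B v) <= K -> vnorm (mxv B w) <= K ->
  mxnorm B <= (`|cross (1, 0) w| + `|cross v (1, 0)| + `|cross (0, 1) w| + `|cross v (0, 1)|) * K.
Proof.
move=> vw_neq0 Bv_le Bw_le.
have Bu_le u : vnorm (mxv B u) <= (`|cross u w| + `|cross v u|) * K.
  have := vnormD (vscale (cross u w) (mxv B v)) (vscale (cross v u) (mxv B w)).
  rewrite -cramer2 !vnormZ => le_sum.
  have : vnorm (mxv B u) <= `|cross v w| * vnorm (mxv B u).
    by have := vnorm_ge0 (mxv B u); nia.
  have : `|cross u w| * vnorm (mxv B v) <= `|cross u w| * K by apply: ler_wpM2l.
  have : `|cross v u| * vnorm (mxv B w) <= `|cross v u| * K by apply: ler_wpM2l.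
  by rewrite mulrDl; lia.
by rewrite mxnorm_cols; have := Bu_le (1, 0); have := Bu_le (0, 1); rewrite !mulrDl; lia.
Qed.

Lemma exists_cross_neq0 M : mxdet M = 1 \/ mxdet M = -1 ->
  M <> mx1 -> M <> mxscale (-1) -> exists v, cross v (mxv M v) != 0.
Proof.
case: M => a b c d; rewrite /mxdet /= => det_unit M_neq1 M_neqN1.
have [c0|c_neq0] := eqVneq c 0; last first.
  by exists (1, 0); rewrite /cross /mxv /=; apply: contra c_neq0 => /eqP; lia.
have [b0|b_neq0] := eqVneq b 0; last first.
  by exists (0, 1); rewrite /cross /mxv /=; apply: contra b_neq0 => /eqP; lia.
have [ad|a_neq_d] := eqVneq a d; last first.
  by exists (1, 1); rewrite /cross /mxv /=; apply: contra a_neq_d => /eqP; lia.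
subst b c d; have : a = 1 \/ a = -1 by nia.
by case=> a_unit; subst a; [case: M_neq1 | case: M_neqN1].
Qed.

Lemma mxmul_scale_comm e B : mxmul (mxscale e) B = mxmul B (mxscale e).
Proof. by case: B => a b c d; apply: mat2_eq => /=; ring. Qed.

Lemma mxscale_mulI s M P : s != 0 ->
  mxmul (mxscale s) M = mxmul (mxscale s) P -> M = P.
Proof.
case: M P => [a b c d] [e f g h] s_neq0 /(congr1 (fun Q => (m11 Q, m12 Q, m21 Q, m22 Q))).
by rewrite /= !mul0r !addr0 !add0r => -[/(mulfI s_neq0) -> /(mulfI s_neq0) ->
  /(mulfI s_neq0) -> /(mulfI s_neq0) ->].
Qed.

Lemma intertwine_scalar B B' M e s : s != 0 ->
  mxmul B M = mxmul (mxscale e) B -> mxmul B' B = mxscale s -> M = mxscale e.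
Proof.
move=> s_neq0 BM B'B; apply: (mxscale_mulI s_neq0).
by rewrite -B'B -mxmulA BM mxmul_scale_comm !mxmulA B'B mxmul_scale_comm.
Qed.

Lemma cross_intertwine B M M' v : mxmul B M = mxmul M' B ->
  cross (mxv B v) (mxv M' (mxv B v)) = mxdet B * cross v (mxv M v).
Proof. by move=> BM; rewrite -mxvM -BM mxvM cross_mxv. Qed.

Lemma mxdet_left_invertible B B' s : s != 0 -> mxmul B' B = mxscale s ->
  mxdet B != 0 /\ `|mxdet B| <= s * s.
Proof.
move=> s_neq0 B'B.
have detB'B : mxdet B' * mxdet B = s * s by rewrite -mxdetM B'B /mxdet /=; ring.
have ss_neq0 : s * s != 0 by rewrite mulf_neq0.
have detB_neq0 : mxdet B != 0.
  by apply: contra ss_neq0; rewrite -detB'B => /eqP ->; rewrite mulr0.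
have detB'_neq0 : mxdet B' != 0.
  by apply: contra ss_neq0; rewrite -detB'B => /eqP ->; rewrite mul0r.
split=> //; have := normr_le_mull (mxdet B) detB'_neq0.
by rewrite detB'B; have := normr_le_sqr s; lia.
Qed.

Lemma intertwiner_bounded M M' N s : (0 < N)%N -> mxexp M N = mx1 -> mxexp M' N = mx1 ->
  M <> mx1 -> M <> mxscale (-1) -> s != 0 ->
  exists K, forall B B', mxmul B M = mxmul M' B -> mxmul B' B = mxscale s -> mxnorm B <= K.
Proof.
move=> N_gt0 MN1 M'N1 M_neq1 M_neqN1 s_neq0.
have [M'_pm1|/not_orP [M'_neq1 M'_neqN1]] := pselect (M' = mx1 \/ M' = mxscale (-1)).
  exists 0 => B B' BM B'B; exfalso.
  by case: M'_pm1 => M'E; rewrite M'E in BM; have := intertwine_scalar s_neq0 BM B'B.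
have tM' := finite_order_torsion_type N_gt0 M'N1 M'_neq1 M'_neqN1.
have [v Mv_neq0] := exists_cross_neq0 (mxdet_finite_order N_gt0 MN1) M_neq1 M_neqN1.
set D := cross v (mxv M v) in Mv_neq0.
have [K1 form_bound] := cross_form_bound (s * s * `|D|) tM'.
exists ((`|cross (1, 0) (mxv M v)| + `|cross v (1, 0)| + `|cross (0, 1) (mxv M v)|
         + `|cross v (0, 1)|) * (K1 + mxnorm M' * K1)) => B B' BM B'B.
have [detB_neq0 detB_le] := mxdet_left_invertible s_neq0 B'B.
have Bv_le : vnorm (mxv B v) <= K1.
  apply: form_bound; rewrite (cross_intertwine _ BM) -/D ?mulf_neq0 //.
  by rewrite normrM ler_wpM2r.
have BMv_le : vnorm (mxv B (mxv M v)) <= mxnorm M' * K1.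
  rewrite -mxvM BM mxvM; apply: le_trans (vnorm_mxv _ _) _.
  by apply: ler_wpM2l => //; rewrite /mxnorm; lia.
apply: mxnorm_le_of_images Mv_neq0 _ _.
  by have := vnorm_ge0 (mxv B (mxv M v)); lia.
by have := vnorm_ge0 (mxv B v); lia.
Qed.

Definition additive2 (f : vec2 -> vec2) : Prop :=
  forall p q, f (zadd2 p q) = zadd2 (f p) (f q).

Definition mx_of (f : vec2 -> vec2) : mat2 :=
  Mat2 (f (1, 0)).1 (f (0, 1)).1 (f (1, 0)).2 (f (0, 1)).2.

Section AdditiveMaps.
Variable f : vec2 -> vec2.
Hypothesis f_add : additive2 f.

Lemma additive2_0 : f (0, 0) = (0, 0).
Proof.
have := f_add (0, 0) (0, 0); rewrite /zadd2 /= !addr0.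
by case: (f (0, 0)) => x y [] ? ?; congr (_, _); lia.
Qed.

Lemma additive2N p : f (- p.1, - p.2) = (- (f p).1, - (f p).2).
Proof.
have := f_add p (- p.1, - p.2); rewrite /zadd2 /= !subrr additive2_0.
by case: (f (- p.1, - p.2)) => x y [] ? ?; congr (_, _); lia.
Qed.

Lemma additive2Zn (n : nat) p : f (vscale n%:Z p) = vscale n%:Z (f p).
Proof.
elim: n => [|n IH]; first by rewrite /vscale /= !mul0r additive2_0.
have -> : vscale n.+1%:Z p = zadd2 p (vscale n%:Z p).
  by rewrite /vscale /zadd2 /=; congr (_, _); lia.
by rewrite f_add IH /vscale /zadd2 /=; congr (_, _); lia.
Qed.

Lemma additive2Z (k : int) p : f (vscale k p) = vscale k (f p).
Proof.
case: k => n; first exact: additive2Zn.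
have -> : vscale (Negz n) p = (- (vscale n.+1%:Z p).1, - (vscale n.+1%:Z p).2).
  by rewrite /vscale /=; congr (_, _); rewrite NegzE; ring.
by rewrite additive2N additive2Zn /vscale /=; congr (_, _); rewrite NegzE; ring.
Qed.

Lemma additive2_mxv v : f v = mxv (mx_of f) v.
Proof.
case: v => x y.
have -> : ((x, y) : vec2) = zadd2 (vscale x (1, 0)) (vscale y (0, 1)).
  by rewrite /zadd2 /vscale /=; congr (_, _); ring.
by rewrite f_add !additive2Z /zadd2 /vscale /mxv /mx_of /=; congr (_, _); ring.
Qed.

End AdditiveMaps.

Section Counting.

Lemma count_le_size_inj (T U : eqType) (P : pred T) (h : T -> U) (s : seq T) (t : seq U) :
  uniq s -> {in s &, injective h} -> (forall x, x \in s -> P x -> h x \in t) ->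
  (count P s <= size t)%N.
Proof.
move=> s_uniq h_inj h_sub; rewrite -size_filter -(size_map h).
apply: uniq_leq_size.
  rewrite map_inj_in_uniq ?filter_uniq // => x y.
  by rewrite !mem_filter => /andP [_ xs] /andP [_ ys]; apply: h_inj.
by move=> y /mapP [x]; rewrite mem_filter => /andP [Px xs] ->; apply: h_sub.
Qed.

Lemma size_le_fibers (T U : eqType) (F : T -> U) (C : nat) (s : seq T) :
  (forall y, count (fun x => F x == y) s <= C)%N -> (size s <= C * size (undup (map F s)))%N.
Proof.
suff fibers u : forall s, (forall y, count (fun x => F x == y) s <= C)%N ->
    (forall x, x \in s -> F x \in u) -> (size s <= C * size u)%N.
  by move=> fib; apply: fibers => // x xs; rewrite mem_undup map_f.
elim: u => [|y u IH] {}s fib s_sub.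
  by case: s fib s_sub => [//|x s] _ /(_ x (mem_head _ _)).
rewrite -(count_predC (fun x => F x == y) s) /= mulnS leq_add //.
have := IH (filter (predC (fun x => F x == y)) s); rewrite size_filter; apply.
  move=> z; rewrite count_filter; apply: leq_trans (fib z).
  by apply: sub_count => x /andP [].
move=> x; rewrite mem_filter => /andP [/= Fx_neq xs].
by have := s_sub x xs; rewrite in_cons (negbTE Fx_neq).
Qed.

Local Open Scope fset_scope.

Lemma finite_set_sub_seq (T : choiceType) (X : set T) (t : seq T) :
  (forall x, X x -> x \in t) -> finite_set X.
Proof.
move=> X_sub; apply: (@sub_finite_set _ _ [set` t]); last exact: finite_seq.
by move=> x /X_sub.
Qed.

Lemma card_fset_set_le (T : choiceType) (X : set T) (t : seq T) :
  (forall x, X x -> x \in t) -> (#|` fset_set X| <= size t)%N.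
Proof.
move=> X_sub; have X_fin := finite_set_sub_seq X_sub.
apply: (@leq_trans #|` [fset x in t]|); last by rewrite card_fseq size_undup.
apply: fsubset_leq_card; apply/fsubsetP => x.
by rewrite in_fset_set // inE => /X_sub xt; rewrite inE.
Qed.

Lemma card_fset_set_ge (T : choiceType) (X : set T) (t : seq T) :
  finite_set X -> uniq t -> (forall x, x \in t -> X x) -> (size t <= #|` fset_set X|)%N.
Proof.
move=> X_fin t_uniq t_sub; rewrite -(undup_id t_uniq) -card_fseq.
apply: fsubset_leq_card; apply/fsubsetP => x.
by rewrite inE => /t_sub Xx; rewrite in_fset_set // inE.
Qed.

Lemma allpairs_f_In (S : Type) (T U : eqType) (F : S -> T -> U) (R : seq S) (P : seq T) r p :
  List.In r R -> p \in P -> F r p \in [seq F r' p' | r' <- R, p' <- P].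
Proof.
elim: R => [//|r0 R IH] /= r_in p_in; rewrite mem_cat.
by case: r_in => [<-|r_in]; [rewrite map_f | rewrite IH ?orbT].
Qed.

End Counting.

Definition interval_int (B : nat) : seq int := [seq k%:Z - B%:Z | k <- iota 0 (2 * B + 1)].

Lemma mem_interval_int B (x : int) : `|x| <= B%:Z -> x \in interval_int B.
Proof. by move=> x_le; apply/mapP; exists (absz (x + B%:Z)); rewrite ?mem_iota /=; lia. Qed.

Definition box (B : nat) : seq vec2 := [seq (i, j) | i <- interval_int B, j <- interval_int B].

Lemma size_box B : size (box B) = ((2 * B + 1) * (2 * B + 1))%N.
Proof. by rewrite size_allpairs size_map size_iota. Qed.

Lemma mem_box B p : vnorm p <= B%:Z -> p \in box B.
Proof.
by case: p => i j; rewrite /vnorm /= => p_le; apply: allpairs_f; apply: mem_interval_int; lia.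
Qed.

Definition quadrant (n : nat) : seq vec2 :=
  [seq (i%:Z, j%:Z) | i <- iota 0 n.+1, j <- iota 0 n.+1].

Lemma quadrant_uniq n : uniq (quadrant n).
Proof. by apply: allpairs_uniq; rewrite ?iota_uniq // => -[a b] [c d] _ _ /= [-> ->]. Qed.

Lemma size_quadrant n : size (quadrant n) = (n.+1 * n.+1)%N.
Proof. by rewrite size_allpairs size_iota. Qed.

Lemma mem_quadrant n v : v \in quadrant n ->
  exists i j, [/\ (i <= n)%N, (j <= n)%N & v = (i%:Z, j%:Z)].
Proof.
case/allpairsP => -[i j] [i_in j_in ->]; exists i, j.
by move: i_in j_in; rewrite !mem_iota !add0n !ltnS.
Qed.

Lemma In_nth (T : Type) (x0 x : T) (l : seq T) :
  List.In x l -> exists j, (j < size l)%N /\ nth x0 l j = x.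
Proof.
elim: l => [//|y l IH] /= [->|x_in]; first by exists 0%N.
by have [j [j_lt <-]] := IH x_in; exists j.+1.
Qed.

Lemma bound_over_seq (T : Type) (P : T -> int -> Prop) (l : seq T) :
  (forall x K K', P x K -> K <= K' -> P x K') ->
  (forall x, List.In x l -> exists K, P x K) -> exists K, forall x, List.In x l -> P x K.
Proof.
move=> P_mono; elim: l => [|y l IH] P_ex; first by exists 0.
have [K1 P1] := P_ex y (or_introl erefl).
have [K2 P2] := IH (fun x x_in => P_ex x (or_intror x_in)).
exists (`|K1| + `|K2|) => x /= [<-|x_in]; first by apply: P_mono P1 _; lia.
by apply: P_mono (P2 x x_in) _; lia.
Qed.

Section VirtuallyZ2.
Variable G : group.
Variable A : set G.
Hypothesis A_normal : is_normal A.
Variable phi : vec2 -> G.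
Hypothesis phiM : forall p q, phi (zadd2 p q) = gmul (phi p) (phi q).
Hypothesis phi_inj : injective phi.
Hypothesis phi_onto : forall x, A x <-> exists p, phi p = x.
Variable R : seq G.
Hypothesis R_cosets : forall g, exists2 r, List.In r R & exists2 a, A a & g = gmul r a.

Local Notation "x * y" := (gmul x y).
Local Notation "x ^-1" := (ginv x).

Lemma A_mul x y : A x -> A y -> A (x * y).
Proof. by case: A_normal => -[_ [A_mul _]] _; apply: A_mul. Qed.

Lemma A_inv x : A x -> A (x^-1).
Proof. by case: A_normal => -[_ [_ A_inv]] _; apply: A_inv. Qed.

Lemma A_conj h x : A x -> A (h^-1 * x * h).
Proof. by case: A_normal => _ A_conj; apply: A_conj. Qed.

Lemma A_exp x n : A x -> A (gexp x n).
Proof.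
move=> Ax; elim: n => [|n IH] /=; last exact: A_mul.
by case: A_normal => -[].
Qed.

Lemma A_phi p : A (phi p).
Proof. by apply/phi_onto; exists p. Qed.

Lemma phi0 : phi (0, 0) = gone.
Proof. by apply: (@gmulI _ (phi (0, 0))); rewrite -phiM gmul1r /zadd2 /= addr0. Qed.

Lemma phiN p : phi (- p.1, - p.2) = (phi p)^-1.
Proof. by apply: ginv_unique; rewrite -phiM /zadd2 /= !subrr phi0. Qed.

Lemma phiC p q : phi p * phi q = phi q * phi p.
Proof. by rewrite -!phiM /zadd2 addrC [p.2 + _]addrC. Qed.

Lemma phiXn (n : nat) p : phi (vscale n%:Z p) = gexp (phi p) n.
Proof.
elim: n => [|n IH] /=; first by rewrite /vscale !mul0r phi0.
have -> : vscale n.+1%:Z p = zadd2 p (vscale n%:Z p).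
  by rewrite /vscale /zadd2 /=; congr (_, _); lia.
by rewrite phiM IH.
Qed.

Lemma coord_spec x : exists p, A x -> phi p = x.
Proof.
have [/phi_onto [p <-]|notAx] := pselect (A x); first by exists p.
by exists (0, 0).
Qed.

(* An arbitrary vector when [~ A x]. *)
Definition coord (x : G) : vec2 := proj1_sig (cid (coord_spec x)).

Lemma coordK x : A x -> phi (coord x) = x.
Proof. by rewrite /coord; case: cid => p /=; apply. Qed.

Lemma phiK p : coord (phi p) = p.
Proof. by apply: phi_inj; rewrite coordK //; apply: A_phi. Qed.

Definition conjc (h : G) (p : vec2) : vec2 := coord (h^-1 * phi p * h).

Lemma phi_conjc h p : phi (conjc h p) = h^-1 * phi p * h.
Proof. by rewrite coordK //; apply/A_conj/A_phi. Qed.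

Lemma conjc_additive h : additive2 (conjc h).
Proof. by move=> p q; apply: phi_inj; rewrite phiM !phi_conjc phiM -!gmulA gmulKVl. Qed.

Lemma conjcM h1 h2 p : conjc (h1 * h2) p = conjc h2 (conjc h1 p).
Proof. by apply: phi_inj; rewrite !phi_conjc ginvM !gmulA. Qed.

Lemma conjc_A a p : A a -> conjc a p = p.
Proof. by move=> /phi_onto [q <-]; apply: phi_inj; rewrite phi_conjc -gmulA phiC gmulKl. Qed.

Lemma conjc_exp x k p : conjc (gexp x k) p = iter k (conjc x) p.
Proof.
elim: k p => [|k IH] p /=; last by rewrite conjcM IH -iterSr.
by apply: phi_inj; rewrite phi_conjc ginv1 gmul1l gmul1r.
Qed.

Definition conjmx (h : G) : mat2 := mx_of (conjc h).

Lemma mxv_conjmx h p : mxv (conjmx h) p = conjc h p.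
Proof. by rewrite -additive2_mxv //; apply: conjc_additive. Qed.

Lemma conjmx_exp x N : A (gexp x N) -> mxexp (conjmx x) N = mx1.
Proof.
move=> AxN; apply: mxv_inj => v; rewrite mxv_exp.
have -> : iter N (mxv (conjmx x)) v = iter N (conjc x) v.
  by elim: N {AxN} => //= n ->; rewrite mxv_conjmx.
by rewrite -conjc_exp conjc_A //; case: v => a b; rewrite /mxv /=; congr (_, _); ring.
Qed.

Lemma conjmx_coset r a : A a -> conjmx (r * a) = conjmx r.
Proof. by move=> Aa; apply: mxv_inj => p; rewrite !mxv_conjmx conjcM conjc_A. Qed.

Lemma exp_same_coset x r i j a1 a2 : (i <= j)%N -> A a1 -> A a2 ->
  gexp x i = r * a1 -> gexp x j = r * a2 -> A (gexp x (j - i)).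
Proof.
move=> le_ij Aa1 Aa2 xi xj.
have -> : gexp x (j - i) = (gexp x i)^-1 * gexp x j.
  by rewrite -(subnKC le_ij) gexpD gmulKl subnKC.
by rewrite xi xj ginvM -gmulA gmulKl; apply: A_mul => //; apply: A_inv.
Qed.

Lemma coset_pigeonhole x : exists2 k, (0 < k <= size R)%N & A (gexp x k).
Proof.
have coset_of (i : 'I_(size R).+1) :
    exists j : 'I_(size R), exists2 a, A a & gexp x i = nth gone R j * a.
  have [r /(In_nth gone) [j [j_lt r_eq]] [a Aa xi]] := R_cosets (gexp x i).
  by exists (Ordinal j_lt), a; rewrite //= r_eq.
pose f i := proj1_sig (cid (coset_of i)).
have coset_f (i : 'I_(size R).+1) : exists2 a, A a & gexp x i = nth gone R (f i) * a.
  by rewrite /f; case: cid.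
have /injectivePn [i [j i_neq_j fij]] : ~~ injectiveb f.
  by apply/injectiveP => /leq_card; rewrite !card_ord ltnn.
wlog lt_ij : i j i_neq_j fij / (i < j)%N.
  move=> wlog_ij; have [lt_ij|lt_ji|/val_inj eq_ij] := ltngtP i j.
  - exact: wlog_ij lt_ij.
  - by apply: (wlog_ij j i); rewrite 1?eq_sym.
  - by rewrite eq_ij eqxx in i_neq_j.
have [a1 Aa1 xi] := coset_f i; have [a2 Aa2 xj] := coset_f j.
exists (j - i)%N; first by have := ltn_ord j; lia.
by apply: (exp_same_coset (ltnW lt_ij) Aa1 Aa2 xi); rewrite fij.
Qed.

Lemma uniform_exponent : exists2 N, (0 < N)%N & forall x, A (gexp x N).
Proof.
exists (size R)`!; first exact: fact_gt0.
move=> x; have [k /andP [k_gt0 k_le] Axk] := coset_pigeonhole x.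
have /dvdnP [d ->] : (k %| (size R)`!)%N by rewrite dvdn_fact ?k_gt0.
by rewrite mulnC gexpM; apply: A_exp.
Qed.

(* The automorphism [f] maps the finite-index sublattice [N A] into [A]; [autc f N]
   is the resulting endomorphism of [Z^2] in coordinates. *)
Definition autc (f : G -> G) (N : nat) (p : vec2) : vec2 := coord (f (phi (vscale N%:Z p))).

Section AutomorphismCoordinates.
Variable N : nat.
Hypothesis AxN : forall x, A (gexp x N).
Variable f : G -> G.
Hypothesis hom_f : is_hom f.

Lemma phi_autc p : phi (autc f N p) = f (phi (vscale N%:Z p)).
Proof. by rewrite coordK // phiXn (homX hom_f). Qed.

Lemma autc_additive : additive2 (autc f N).
Proof.
move=> p q; apply: phi_inj; rewrite phiM !phi_autc -hom_f -phiM.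
by congr (f (phi _)); rewrite /vscale /zadd2 /=; congr (_, _); ring.
Qed.

Lemma autc_conjc g p : autc f N (conjc g p) = conjc (f g) (autc f N p).
Proof.
apply: phi_inj; rewrite phi_autc phi_conjc phi_autc.
by rewrite -(additive2Zn (conjc_additive g)) phi_conjc !hom_f (homV hom_f).
Qed.

Lemma mx_of_autc_intertwine g :
  mxmul (mx_of (autc f N)) (conjmx g) = mxmul (conjmx (f g)) (mx_of (autc f N)).
Proof.
apply: mxv_inj => v.
rewrite !mxvM !mxv_conjmx -!additive2_mxv; [exact: autc_conjc | exact: autc_additive..].
Qed.

End AutomorphismCoordinates.

Lemma mx_of_autc_inv N f f' : (forall x, A (gexp x N)) -> is_hom f -> is_hom f' -> cancel f f' ->
  mxmul (mx_of (autc f' N)) (mx_of (autc f N)) = mxscale (N * N)%:Z.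
Proof.
move=> AxN hom_f hom_f' fK; apply: mxv_inj => v.
rewrite mxvM -!additive2_mxv; try exact: autc_additive.
apply: phi_inj; rewrite (phi_autc AxN hom_f') phiXn (phi_autc AxN hom_f) -(homX hom_f) fK -phiXn.
by congr phi; case: v => a b; rewrite /vscale /mxv /=; congr (_, _); rewrite PoszM; ring.
Qed.

Lemma aut_mx_bounded N g : (0 < N)%N -> (forall x, A (gexp x N)) ->
  conjmx g <> mx1 -> conjmx g <> mxscale (-1) ->
  exists K : nat, forall f, is_aut f -> mxnorm (mx_of (autc f N)) <= K%:Z.
Proof.
move=> N_gt0 AxN g_neq1 g_neqN1.
pose P r K := forall B B', mxmul B (conjmx g) = mxmul (conjmx r) B ->
  mxmul B' B = mxscale (N * N)%:Z -> mxnorm B <= K.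
have [K boundR] : exists K, forall r, List.In r R -> P r K.
  apply: bound_over_seq => [r K K' PK le_KK' B B' BM B'B|r _].
    exact: le_trans (PK B B' BM B'B) le_KK'.
  have NN_neq0 : (N * N)%:Z != 0 by rewrite -lt0n muln_gt0 N_gt0.
  exact: intertwiner_bounded N_gt0 (conjmx_exp (AxN g)) (conjmx_exp (AxN r)) g_neq1 g_neqN1 NN_neq0.
exists (absz K) => f [hom_f [f' fK f'K]].
have hom_f' := hom_inv hom_f fK f'K.
have [r r_in [a Aa fg]] := R_cosets (f g).
apply: le_trans (boundR r r_in _ (mx_of (autc f' N)) _ _) _; last by lia.
  by rewrite -(conjmx_coset r Aa) -fg mx_of_autc_intertwine.
exact: mx_of_autc_inv.
Qed.

(* If f (phi (N x0)) = phi (N v) then N v = B x0 with B = mx_of (autc f N) of norm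
   at most K, and there are at most size (box K)^2 such matrices. *)
Lemma orbit_fiber_bound N (K : nat) x0 (s : seq vec2) : (0 < N)%N ->
  (forall x, A (gexp x N)) -> (forall f, is_aut f -> mxnorm (mx_of (autc f N)) <= K%:Z) ->
  uniq s ->
  (count (fun v => aut_orbit (phi (vscale N%:Z v)) == aut_orbit (phi (vscale N%:Z x0))) s
    <= size (box K) * size (box K))%N.
Proof.
move=> N_gt0 AxN aut_bound s_uniq.
rewrite -(size_allpairs (fun q1 q2 : vec2 => mxv (Mat2 q1.1 q1.2 q2.1 q2.2) x0)).
apply: (count_le_size_inj (h := vscale N%:Z)) => // [v w _ _|v _ /eqP same_orbit].
  exact: vscale_inj.
have : aut_orbit (phi (vscale N%:Z x0)) (phi (vscale N%:Z v)).
  by rewrite -same_orbit; exists id; split => //; apply: is_aut_id.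
case=> f [[hom_f f_bij] fx0].
have <- : autc f N x0 = vscale N%:Z v by rewrite /autc fx0 phiK.
rewrite (additive2_mxv (autc_additive AxN hom_f)).
have := aut_bound f (conj hom_f f_bij); case: (mx_of _) => a b c d; rewrite /mxnorm /= => B_le.
by apply/allpairsP; exists ((a, b), (c, d)); split => //; apply: mem_box; rewrite /vnorm /=; lia.
Qed.

Lemma in_ball_phi_multiple S e k : List.In (phi e) S ->
  exists m, in_ball S m (phi (vscale k e)).
Proof.
move=> e_in.
have e_ball : in_ball S 1 (phi e) by apply: in_ball_letter; exists (phi e); [|left].
have eV_ball : in_ball S 1 (phi e)^-1 by apply: in_ball_letter; exists (phi e); [|right].
case: k => n; first by exists (n * 1)%N; rewrite phiXn; apply: in_ballX.
exists (n.+1 * 1)%N.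
have -> : vscale (Negz n) e = (- (vscale n.+1%:Z e).1, - (vscale n.+1%:Z e).2).
  by rewrite /vscale /=; congr (_, _); rewrite NegzE; ring.
by rewrite phiN phiXn ginvX; apply: in_ballX.
Qed.

Lemma generates_cosets_basis : generates (R ++ [:: phi (1, 0); phi (0, 1)]).
Proof.
set S0 := R ++ _; move=> x; have [r r_in [a /phi_onto [[p1 p2] <-] ->]] := R_cosets x.
have e1_in : List.In (phi (1, 0)) S0 by apply: List.in_or_app; right; left.
have e2_in : List.In (phi (0, 1)) S0 by apply: List.in_or_app; right; right; left.
have [m1 ball1] := in_ball_phi_multiple p1 e1_in.
have [m2 ball2] := in_ball_phi_multiple p2 e2_in.
have r_ball : in_ball S0 1 r.
  by apply: in_ball_letter; exists r; [apply: List.in_or_app; left | left].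
exists (1 + (m1 + m2))%N.
have -> : phi (p1, p2) = phi (vscale p1 (1, 0)) * phi (vscale p2 (0, 1)).
  by rewrite -phiM /vscale /zadd2 /=; congr (phi (_, _)); ring.
by apply: in_ballM => //; apply: in_ballM.
Qed.

Section Growth.
Variable S : seq G.

Lemma letter_coset_step : exists K, forall s r, gen_letter S s -> List.In r R ->
  exists r' q, [/\ List.In r' R, vnorm q <= K & s * r = r' * phi q].
Proof.
pose step t r K := exists r' q, [/\ List.In r' R, vnorm q <= K & t * r = r' * phi q].
have step_mono t r K K' : step t r K -> K <= K' -> step t r K'.
  by move=> [r' [q [r'_in q_le tr]]] le_KK'; exists r', q; split; rewrite // (le_trans q_le).
have step_ex t r : exists K, step t r K.
  have [r' r'_in [a /phi_onto [q <-] tr]] := R_cosets (t * r).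
  by exists (vnorm q), r', q.
have [K stepK] : exists K, forall t, List.In t S ->
    forall r, List.In r R -> step t r K /\ step t^-1 r K.
  apply: bound_over_seq => [t K K' stepK le_KK' r r_in|t _].
    by have [step_t step_tV] := stepK r r_in; split; apply: step_mono le_KK'.
  apply: bound_over_seq => [r K K' [step_t step_tV] le_KK'|r _].
    by split; apply: step_mono le_KK'.
  have [K1 step_t] := step_ex t r; have [K2 step_tV] := step_ex t^-1 r.
  by exists (`|K1| + `|K2|); split; [apply: step_mono step_t _ | apply: step_mono step_tV _]; lia.
by exists K => s r [t t_in [->|->]] r_in; case: (stepK t t_in r r_in).
Qed.

Lemma ball_coset_coords : exists K0 Kc : nat, forall n x, in_ball S n x ->
  exists r p, [/\ List.In r R, vnorm p <= (K0 + n * Kc)%:Z & x = r * phi p].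
Proof.
have [K stepK] := letter_coset_step.
have [r0 r0_in [a0 /phi_onto [q0 <-] r0q0]] := R_cosets gone.
exists (absz (vnorm q0)), (absz K) => n _ [l [l_letters [l_size <-]]].
suff [r [p [r_in p_le lE]]] : exists r p, [/\ List.In r R,
    vnorm p <= (absz (vnorm q0) + size l * absz K)%:Z & word_value l = r * phi p].
  exists r, p; split => //; apply: le_trans p_le _.
  by rewrite lez_nat leq_add2l leq_mul2r l_size orbT.
elim: l l_letters {l_size} => [|s l IH] letters.
  by exists r0, q0; split => //; have := vnorm_ge0 q0; lia.
have /List.Forall_cons_iff [s_letter /IH [r [p [r_in p_le lE]]]] := letters.
have [r' [q [r'_in q_le sr]]] := stepK s r s_letter r_in.
exists r', (zadd2 q p); split => //; last by rewrite /= lE gmulA sr -gmulA -phiM.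
by rewrite [size _]/= mulSn; apply: le_trans (vnormD q p) _; lia.
Qed.

Definition ball_orbits (n : nat) : set (set G) :=
  [set O | exists x, in_ball S n x /\ O = aut_orbit x].

Lemma ball_orbits_sub : exists K0 Kc : nat, forall n O, ball_orbits n O ->
  O \in [seq aut_orbit (r * phi p) | r <- R, p <- box (K0 + n * Kc)].
Proof.
have [K0 [Kc cover]] := ball_coset_coords.
exists K0, Kc => n _ [x [x_ball ->]].
have [r [p [r_in p_le ->]]] := cover n x x_ball.
by apply: allpairs_f_In => //; apply: mem_box.
Qed.

Lemma ball_orbits_finite n : finite_set (ball_orbits n).
Proof. by have [K0 [Kc sub]] := ball_orbits_sub; apply: finite_set_sub_seq (sub n). Qed.

Lemma aut_growth_upper : exists2 lam, (0 < lam)%N &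
  forall n, (aut_growth S n <= lam * (lam * n + lam) ^ 2 + lam)%N.
Proof.
have [K0 [Kc sub]] := ball_orbits_sub.
set D := (2 * K0 + 2 * Kc + 1)%N.
exists (size R * (D * D) + 1)%N; rewrite ?addn1 // => n.
set lam := (size R * (D * D)).+1.
apply: leq_trans (card_fset_set_le (sub n)) _.
rewrite size_allpairs size_box; apply: leq_trans (leq_addr _ _).
have box_le : (2 * (K0 + n * Kc) + 1 <= D * n.+1)%N by rewrite /D; nia.
have n_le : (n.+1 <= lam * n + lam)%N by nia.
apply: (@leq_trans (size R * (D * D) * (n.+1 * n.+1))).
  by rewrite -mulnA leq_mul2l mulnACA leq_mul ?orbT.
by rewrite expnS expn1 leq_mul // leq_mul.
Qed.

Lemma phi_quadrant_in_ball N l1 l2 n v :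
  in_ball S l1 (phi (1, 0)) -> in_ball S l2 (phi (0, 1)) -> v \in quadrant n ->
  in_ball S (N * n * (l1 + l2)) (phi (vscale N%:Z v)).
Proof.
move=> ball1 ball2 /mem_quadrant [i [j [i_le j_le ->]]].
have -> : phi (vscale N%:Z (i%:Z, j%:Z)) = gexp (phi (1, 0)) (N * i) * gexp (phi (0, 1)) (N * j).
  by rewrite -!phiXn -phiM /vscale /zadd2 /=; congr (phi (_, _)); rewrite !PoszM; ring.
apply: in_ballS (in_ballM (in_ballX (N * i) ball1) (in_ballX (N * j) ball2)).
by rewrite mulnDr leq_add // leq_mul2r leq_mul2l ?i_le ?j_le !orbT.
Qed.

Lemma aut_growth_lower g : generates S -> conjmx g <> mx1 -> conjmx g <> mxscale (-1) ->
  exists2 lam, (0 < lam)%N & forall n, (n ^ 2 <= lam * aut_growth S (lam * n + lam) + lam)%N.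
Proof.
move=> S_gen g_neq1 g_neqN1.
have [N N_gt0 AxN] := uniform_exponent.
have [K aut_bound] := aut_mx_bounded N_gt0 AxN g_neq1 g_neqN1.
have [l1 ball1] := S_gen (phi (1, 0)); have [l2 ball2] := S_gen (phi (0, 1)).
set C := (size (box K) * size (box K))%N.
exists (C + N * (l1 + l2) + 1)%N; rewrite ?addn1 // => n.
set lam := (C + N * (l1 + l2)).+1.
pose F v := aut_orbit (phi (vscale N%:Z v)).
have fibers_le : (size (quadrant n) <= C * size (undup (map F (quadrant n))))%N.
  apply: size_le_fibers => O.
  have [/hasP [x0 _ /eqP <-]|] := boolP (has (fun v => F v == O) (quadrant n)).
    exact: orbit_fiber_bound N_gt0 AxN aut_bound (quadrant_uniq n).
  by rewrite has_count -leqNgt leqn0 => /eqP ->.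
have orbits_le : (size (undup (map F (quadrant n))) <= aut_growth S (lam * n + lam))%N.
  apply: card_fset_set_ge; [exact: ball_orbits_finite | exact: undup_uniq |].
  move=> _ /[!mem_undup] /mapP [v v_in ->]; exists (phi (vscale N%:Z v)); split => //.
  by apply: in_ballS (phi_quadrant_in_ball N ball1 ball2 v_in); nia.
rewrite size_quadrant in fibers_le.
apply: leq_trans (leq_addr _ _); apply: leq_trans (leq_mul (leqnSn n) (leqnSn n)) _.
by apply: leq_trans fibers_le (leq_mul _ orbits_le); rewrite /lam; lia.
Qed.

End Growth.

Lemma virtually_Z2_quadratic_aut_growth g :
  (exists2 a, A a & g^-1 * a * g <> a) -> (exists2 a, A a & g^-1 * a * g <> a^-1) ->
  quadratic_aut_growth G.
Proof.
move=> [a /phi_onto [p <-] gp_neq] [b /phi_onto [q <-] gq_neq].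
have g_neq1 : conjmx g <> mx1.
  move=> g1; apply: gp_neq; rewrite -phi_conjc -mxv_conjmx g1; congr phi.
  by case: p => x y; rewrite /mxv /=; congr (_, _); ring.
have g_neqN1 : conjmx g <> mxscale (-1).
  move=> gN1; apply: gq_neq; rewrite -phi_conjc -mxv_conjmx gN1 -phiN; congr phi.
  by case: q => x y; rewrite /mxv /=; congr (_, _); ring.
split; first by exists (R ++ [:: phi (1, 0); phi (0, 1)]); apply: generates_cosets_basis.
move=> S S_gen; split.
  by have [lam lam_gt0 upper] := aut_growth_upper S; exists lam.
by have [lam lam_gt0 lower] := aut_growth_lower S_gen g_neq1 g_neqN1; exists lam.
Qed.

End VirtuallyZ2.

Theorem mainTheorem10 (G : group) (A : set G) :
  is_normal A -> finite_index A -> iso_Z2 A ->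
  (exists g : G,
     (exists2 a, A a & gmul (gmul (ginv g) a) g <> a) /\
     (exists2 a, A a & gmul (gmul (ginv g) a) g <> ginv a)) ->
  quadratic_aut_growth G.
Proof.
move=> A_normal [R R_cosets] [phi [phiM [phi_inj phi_onto]]] [g [g_not_id g_not_inv]].
exact: (virtually_Z2_quadratic_aut_growth A_normal phiM phi_inj phi_onto R_cosets
  g_not_id g_not_inv).
Qed.
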